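(* Let $G=(V,E)$ be a finite graph with adjacency matrix $A$, and let $\eta:V\to\mathbb Z$ be a labeling. Let $\ell$ and $b$ be the numbers of level and bad vertices respectively. For $j\in\mathbb Z$ let $L_j$ be the set of level vertices with label $j$. If $\lambda$ is an eigenvalue of $A$ of multiplicity $m$, and $\ell_j$ denotes the multiplicity of $\lambda$ as an eigenvalue of the adjacency matrix of the subgraph induced by $L_j$ (with $\ell_j=0$ if it is not an eigenvalue), then $$m\le b+\sum_j\ell_j.$$ Consequently, for the multiplicities $m_1,\dots,m_k$ of any $k$ distinct eigenvalues of $A$, $m_1+\dots+m_k\le kb+\ell$.
   Context: Given a graph $G=(V,E)$ and a labeling $\eta:V\to\mathbb Z$, a vertex $v$ is called: (i) prodigy if it has a neighbour $w$ with $\eta(w)<\eta(v)$ such that all other neighbours of $w$ (other than $v$) have label less than $\eta(v)$; (ii) level if it is not prodigy and all of its neighbours have label $\le\eta(v)$; (iii) bad if it is neither prodigy nor level. *)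

From HB Require Import structures.
From mathcomp Require Import all_boot all_order all_algebra.
Set Implicit Arguments. Unset Strict Implicit. Unset Printing Implicit Defensive.
Import Order.TTheory GRing.Theory Num.Theory.

(* A finite simple graph on vertex set 'I_n : a symmetric irreflexive
   relation e; a labeling eta : 'I_n -> int. *)
Section Graph.
Variables (n : nat) (e : rel 'I_n) (eta : 'I_n -> int).

Local Open Scope ring_scope.

Definition prodigy (v : 'I_n) : bool :=
  [exists w, [&& e v w, eta w < eta v &
     [forall u, (e w u && (u != v)) ==> (eta u < eta v)]]].

Definition level (v : 'I_n) : bool :=
  ~~ prodigy v && [forall w, e v w ==> (eta w <= eta v)].

Definition bad (v : 'I_n) : bool := ~~ prodigy v && ~~ level v.

Definition Lset (j : int) : {set 'I_n} := [set v | level v & eta v == j].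

Definition adjmx (R : nzRingType) : 'M[R]_n := \matrix_(i, k) (e i k)%:R.

Definition induced_adjmx (R : nzRingType) (S : {set 'I_n}) : 'M[R]_#|S| :=
  \matrix_(i, k) (e (enum_val i) (enum_val k))%:R.

End Graph.

(* multiplicity of a as an eigenvalue of the square matrix M
   (dimension of the eigenspace; 0 if a is not an eigenvalue) *)
Definition eigmult (F : fieldType) (m : nat) (M : 'M[F]_m) (a : F) : nat :=
  \rank (eigenspace M a).

From mathcomp Require Import all_boot all_order all_algebra zify.
Import Order.TTheory GRing.Theory Num.Theory.
Set Implicit Arguments. Unset Strict Implicit.

(* Eigenvectors are row vectors u with u A = lam u, so that the
   coordinate of u A at v is the sum of the coordinates of u over the
   neighbours of v.
   1. Forcing zeros: if u vanishes on every vertex of label < c and on every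
      bad vertex, then it also vanishes on the prodigy vertices of label c
      (look at the eigen-equation at the witness w), hence on all non-level
      vertices of label c.  Its restriction to L_c is then an eigenvector of
      the subgraph induced by L_c, because the neighbours of a level vertex of
      label c outside L_c carry zero coordinates.
   2. Peeling labels: for a space of such vectors ("tame at c"), the
      restriction map to L_c sends it into the lam-eigenspace of L_c, and its
      kernel is tame at c+1; induction on the labels gives
      rank <= sum_{j >= c} l_j.
   3. Part 1: the lam-eigenspace has rank <= b + rank of its part vanishing on
      the bad vertices, which is tame below every label.  Part 2: distinct
      eigenvalues have independent eigenspaces, so sum_lam l_j(lam) <= |L_j|,
      and the sets L_j are disjoint subsets of the level vertices. *)

Local Open Scope ring_scope.

Lemma sum_eigmult_le (F : fieldType) (m : nat) (M : 'M[F]_m) (s : seq F) :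
  uniq s -> (\sum_(a <- s) eigmult M a <= m)%N.
Proof.
move=> s_uniq; rewrite (big_nth 0) big_mkord.
have s_inj : {in predT &, injective (fun i : 'I_(size s) => s`_i)}.
  by move=> i j _ _ /eqP; rewrite nth_uniq // => /eqP /val_inj.
have /mxdirectP /= <- := mxdirect_sum_eigenspace M s_inj.
exact: rank_leq_col.
Qed.

Section Peeling.

Variables (R : realFieldType) (n : nat) (e : rel 'I_n) (eta : 'I_n -> int).
Hypothesis e_sym : symmetric e.
Variable lam : R.

Local Notation A := (adjmx e R).
Local Notation L := (Lset e eta).

Definition restrict (S : {set 'I_n}) : 'M[R]_(n, #|S|) :=
  \matrix_(i, k) (i == enum_val k)%:R.

Lemma restrictE (S : {set 'I_n}) (u : 'rV[R]_n) k :
  (u *m restrict S) 0 k = u 0 (enum_val k).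
Proof.
rewrite !mxE (bigD1 (enum_val k)) //= mxE eqxx mulr1 big1 ?addr0 // => i ik.
by rewrite mxE (negbTE ik) mulr0.
Qed.

Lemma restrict_eq0 (S : {set 'I_n}) (u : 'rV[R]_n) v :
  u *m restrict S = 0 -> v \in S -> u 0 v = 0.
Proof. by move=> uS0 vS; rewrite -(enum_rankK_in vS vS) -restrictE uS0 mxE. Qed.

Lemma adjmxE (u : 'rV[R]_n) v : (u *m A) 0 v = \sum_i u 0 i * (e i v)%:R.
Proof. by rewrite !mxE; under eq_bigr do rewrite mxE. Qed.

(* An eigenvector vanishing on all labels below that of a prodigy vertex v
   vanishes at v: at the witness w, the eigen-equation reads lam u_w = u_v. *)
Lemma prodigy_vanish (u : 'rV[R]_n) v :
  u *m A = lam *: u -> (forall w, eta w < eta v -> u 0 w = 0) ->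
  prodigy e eta v -> u 0 v = 0.
Proof.
move=> u_eig u_low /existsP[w /and3P[evw ltwv /forallP w_nbr]].
have := congr1 (fun M : 'rV[R]_n => M 0 w) u_eig.
rewrite adjmxE mxE (u_low w ltwv) mulr0 (bigD1 v) //= evw mulr1 big1 ?addr0 // => i iv.
case eiw: (e i w); last by rewrite mulr0.
by rewrite u_low ?mul0r //; have := w_nbr i; rewrite e_sym eiw iv.
Qed.

Definition tame (c : int) (u : 'rV[R]_n) : Prop :=
  [/\ u *m A = lam *: u, forall v, bad e eta v -> u 0 v = 0
    & forall v, eta v < c -> u 0 v = 0].

Lemma tame_nonlevel c u v :
  tame c u -> ~~ level e eta v -> eta v = c -> u 0 v = 0.
Proof.
move=> [u_eig u_bad u_low] nlv ev.
case pv: (prodigy e eta v); last by apply: u_bad; rewrite /bad pv.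
by apply: prodigy_vanish pv => // w; rewrite ev; apply: u_low.
Qed.

Lemma tame_restrict_eig c u :
  tame c u -> (u *m restrict (L c) <= eigenspace (induced_adjmx e R (L c)) lam)%MS.
Proof.
move=> u_tame; have [u_eig _ u_low] := u_tame.
apply/eigenspaceP/rowP => k; have := enum_valP k; set v := enum_val k.
rewrite inE => /andP[lv /eqP ev].
rewrite [LHS]mxE [RHS]mxE restrictE.
under eq_bigr do rewrite restrictE mxE.
rewrite -(big_enum_val (fun x => u 0 x * (e x v)%:R)) /=.
have := congr1 (fun M : 'rV[R]_n => M 0 v) u_eig; rewrite adjmxE mxE => <-.
rewrite [RHS](bigID (mem (L c))) /= [X in _ = _ + X]big1 ?addr0 // => i iNL.
case eiv: (e i v); last by rewrite mulr0.
have : eta i <= eta v by move: lv => /andP[_ /forallP/(_ i)]; rewrite e_sym eiv.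
rewrite le_eqVlt => /orP[/eqP ei | lt_iv]; last by rewrite u_low ?mul0r -?ev.
rewrite (tame_nonlevel u_tame) ?mul0r ?ei //.
by move: iNL; apply: contra => li; rewrite inE li ei ev eqxx.
Qed.

Lemma tame_succ c u : tame c u -> u *m restrict (L c) = 0 -> tame (c + 1) u.
Proof.
move=> u_tame uL0; have [u_eig u_bad u_low] := u_tame; split=> // v.
rewrite ltzD1 le_eqVlt => /orP[/eqP ev | ]; last exact: u_low.
case lv: (level e eta v); last by rewrite (tame_nonlevel u_tame) ?lv.
by apply: restrict_eq0 uL0 _; rewrite inE lv ev eqxx.
Qed.

Variable labels : seq int.
Hypothesis labels_uniq : uniq labels.
Hypothesis labels_level : forall v, level e eta v -> eta v \in labels.

Lemma eigmult_label c :
  eigmult (induced_adjmx e R (L c)) lam =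
  (\sum_(j <- labels | j == c) eigmult (induced_adjmx e R (L j)) lam)%N.
Proof.
have [c_lab | c_lab] := boolP (c \in labels).
  rewrite -big_filter (eq_filter (a2 := pred1 c)) //.
  by rewrite filter_pred1_uniq // big_seq1.
rewrite big_hasC; last by apply: contra c_lab => /hasP[j j_lab /eqP <-].
have /eqP L0 : #|L c| == 0%N.
  rewrite cards_eq0; apply/eqP/setP => v; rewrite !inE.
  apply/negbTE/andP => -[lv /eqP ev].
  by move: (labels_level lv); rewrite ev (negPf c_lab).
by apply/eqP; rewrite -leqn0 -L0 rank_leq_col.
Qed.

Lemma rank_tame_le c m (S : 'M[R]_(m, n)) :
  (forall u, (u <= S)%MS -> tame c u) ->
  (\rank S <= \sum_(j <- labels | (c <= j)%R) eigmult (induced_adjmx e R (L j)) lam)%N.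
Proof.
have [k below] : exists k : nat, forall v, eta v < c + k%:Z.
  exists (\sum_v `|eta v - c|%N).+1 => v.
  have : (`|eta v - c| <= \sum_v `|eta v - c|)%N by rewrite (bigD1 v) //= leq_addr.
  lia.
elim: k c m S below => [|k IH] c m S below S_tame.
  suff -> : S = 0 by rewrite mxrank0.
  apply/row_matrixP => i; have [_ _ u_low] := S_tame _ (row_sub i S).
  by apply/rowP => v; rewrite row0 [RHS]mxE u_low //; have := below v; rewrite addr0.
rewrite -(mxrank_mul_ker S (restrict (L c))) (bigID (pred1 c)) /=.
apply: leq_add.
  rewrite (eq_bigl (pred1 c)) -?eigmult_label; last first.
    by move=> j /=; case: eqP => [->|]; rewrite ?lexx ?andbF.
  apply: mxrankS; apply/row_subP => i; rewrite row_mul.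
  exact/tame_restrict_eig/S_tame/row_sub.
rewrite (eq_bigl (fun j => c + 1 <= j)); last first.
  by move=> j /=; rewrite eq_sym; case: ltgtP => //=; lia.
apply: IH => [v | u]; first by have := below v; lia.
rewrite sub_capmx => /andP[uS /sub_kermxP uL0].
exact: tame_succ (S_tame _ uS) uL0.
Qed.

Lemma eigmult_le :
  (eigmult A lam <= #|[set v | bad e eta v]| +
     \sum_(j <- labels) eigmult (induced_adjmx e R (L j)) lam)%N.
Proof.
rewrite /eigmult -(mxrank_mul_ker _ (restrict [set v | bad e eta v])).
apply: leq_add; first exact: rank_leq_col.
pose c := - (\sum_v `|eta v|%N)%:Z.
have c_low v : c <= eta v.
  have : (`|eta v| <= \sum_v `|eta v|)%N by rewrite (bigD1 v) //= leq_addr.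
  rewrite /c; lia.
rewrite (bigID (fun j => c <= j)) /=; apply: leq_trans (leq_addr _ _).
apply: rank_tame_le => u.
rewrite sub_capmx => /andP[/eigenspaceP u_eig /sub_kermxP u_bad].
split=> // v; first by move=> bv; apply: restrict_eq0 u_bad _; rewrite inE.
by have := c_low v; rewrite leNgt => /negPf->.
Qed.

End Peeling.

(* The sets L_j of distinct labels j are disjoint sets of level vertices. *)
Lemma sum_card_Lset_le (n : nat) (e : rel 'I_n) (eta : 'I_n -> int)
    (labels : seq int) :
  uniq labels ->
  (\sum_(j <- labels) #|Lset e eta j| <= #|[set v | level e eta v]|)%N.
Proof.
move=> labels_uniq; rewrite -sum1_card.
under eq_bigr do rewrite -sum1_card big_mkcond /=.
rewrite exchange_big /= [leqRHS]big_mkcond /=; apply: leq_sum => v _.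
rewrite inE; case lv: (level e eta v); last by rewrite big1 // => j _; rewrite inE lv.
under eq_bigr do rewrite inE lv /=.
rewrite -big_mkcond sum1_count (eq_count (a2 := pred1 (eta v))) //.
by rewrite count_uniq_mem ?leq_b1.
Qed.

Local Close Scope ring_scope.

Theorem theorem2p1 (R : realFieldType) (n : nat) (e : rel 'I_n)
    (e_sym : symmetric e) (e_irr : irreflexive e) (eta : 'I_n -> int) :
  let A := @adjmx n e R in
  let b := #|[set v | bad e eta v]| in
  let l := #|[set v | level e eta v]| in
  let labels := undup [seq eta v | v <- enum [set v | level e eta v]] in
  (forall lam : R,
     (eigmult A lam <= b + \sum_(j <- labels)
                             eigmult (@induced_adjmx n e R (Lset e eta j)) lam)%N)
  /\
  (forall s : seq R, uniq s -> all (eigenvalue A) s ->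
     (\sum_(lam <- s) eigmult A lam <= size s * b + l)%N).
Proof.
move=> A b l labels.
have labels_uniq : uniq labels := undup_uniq _.
have labels_level v : level e eta v -> eta v \in labels.
  by move=> lv; rewrite mem_undup map_f // mem_enum inE.
have part1 (lam : R) := eigmult_le e_sym lam labels_uniq labels_level.
split=> // s s_uniq _.
apply: leq_trans (leq_sum s (fun lam _ => part1 lam)) _.
rewrite big_split /= big_const_seq count_predT iter_addn_0 mulnC leq_add2l.
rewrite exchange_big /=; apply: leq_trans (sum_card_Lset_le e eta labels_uniq).
by apply: leq_sum => j _; apply: sum_eigmult_le.
Qed.
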